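(* Let $w \in \mathfrak{S}_n$ be a prism and let $i \in \textsf{supp}(w)$ be unconfined in the reduced words of $w$, with $i-1 \in \textsf{supp}(w)$ and $i+1 \in \textsf{supp}(w)$. Let $R = \{(a,2) : 0 \le a \le 4\} \cup \{(2,b) : 0 \le b \le 4\}$, $U = \{(a,b) : a \in \{0,1,2\},\ b \in \{3,4\}\}$ and $D = \{(a,b) : a \in \{3,4\},\ b \in \{0,1,2\}\}$. Then $w$ contains at least one of the following calibrated mesh patterns, each with calibration $x_2 = i$ and $y_2 = i$: (a) $(4123, R \cup D)$; (b) $(2341, R \cup U)$; (c) $(3142, R \cup U \cup D)$; (d) $(2413, R \cup U \cup D)$.
   Context: Reduced words, support, Bruhat order: $\sigma_i$ swaps $i,i+1$; a reduced word of $w$ is a minimal-length word $i_1\cdots i_\ell$ with $w=\sigma_{i_1}\cdots\sigma_{i_\ell}$; $\textsf{supp}(w)$ is the set of letters in any reduced word; $u\preceq w$ iff a reduced word of $u$ is a subword of one of $w$; $B(w)=\{u:u\preceq w\}$; $w$ is a prism if $B(w)\cong\mathbf{2}\times X$ for some poset $X$ ($\mathbf{2}$ the two-element chain). A letter $i$ appearing exactly once in a reduced word $s$ is unconfined in $s$ if that occurrence is neither between two $i+1$'s nor between two $i-1$'s; this then holds in all reduced words of $w$. Calibrated mesh patterns: let $p \in \mathfrak{S}_k$ (written in one-line notation) and $M \subseteq \{0,\dots,k\}^2$ (cell $(a,b)$ is the unit square with lower-left corner $(a,b)$ in the grid $[0,k+1]^2$ containing the graph $\{(j,p(j))\}$ of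 $p$). An occurrence of $p$ in $w \in \mathfrak{S}_n$ is a choice of positions $x_1<\cdots<x_k$ such that $w(x_1)\cdots w(x_k)$ is in the same relative order as $p(1)\cdots p(k)$; let $y_1<\cdots<y_k$ be the values $\{w(x_1),\dots,w(x_k)\}$ in increasing order, and set $x_0=y_0=0$, $x_{k+1}=y_{k+1}=n+1$. Such an occurrence is an occurrence of the mesh pattern $(p,M)$ if for every $(a,b)\in M$ there is no $x$ with $x_a < x < x_{a+1}$ and $y_b < w(x) < y_{b+1}$. A calibrated mesh pattern additionally prescribes values for some of the $x_a$ and $y_b$; $w$ contains it if $w$ has an occurrence of $(p,M)$ meeting those prescriptions. *)

(* Permutations of [n] = {1,...,n} are modelled by 'S_n
   (permutations of 'I_n = {0,...,n-1}); value/position k of the paper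
   corresponds to ordinal k-1. *)
From mathcomp Require Import all_boot all_order all_fingroup.
Set Implicit Arguments. Unset Strict Implicit. Unset Printing Implicit Defensive.

Definition sgm (n : nat) (i : nat) : 'S_n :=
  match (insub i.-1 : option 'I_n), (insub i : option 'I_n) with
  | Some a, Some b => if 0 < i then tperm a b else 1%g
  | _, _ => 1%g
  end.

Definition valid_word (n : nat) (s : seq nat) : bool := all (fun j => 0 < j < n) s.

(* the permutation sigma_{i1} o sigma_{i2} o ... o sigma_{il} (composition of maps;
   note (p * q) x = q (p x) in mathcomp) *)
Definition word_perm (n : nat) (s : seq nat) : 'S_n :=
  foldr (fun j acc => (acc * sgm n j)%g) 1%g s.

Definition reduced (n : nat) (w : 'S_n) (s : seq nat) : Prop :=
  valid_word n s /\ word_perm n s = w /\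
  forall t, valid_word n t -> word_perm n t = w -> size s <= size t.

Definition supp (n : nat) (w : 'S_n) (i : nat) : Prop :=
  exists s, reduced w s /\ i \in s.

(* Bruhat order via the subword property *)
Definition bruhat (n : nat) (u w : 'S_n) : Prop :=
  exists su sw, reduced u su /\ reduced w sw /\ subseq su sw.

(* w is a prism: the interval B(w) = {u | u <= w} is isomorphic as a poset
   to 2 x X for some poset X (product order, 2 = chain false < true) *)
Definition prism (n : nat) (w : 'S_n) : Prop :=
  exists (X : Type) (leX : X -> X -> Prop),
    (forall x, leX x x) /\
    (forall x y, leX x y -> leX y x -> x = y) /\
    (forall x y z, leX x y -> leX y z -> leX x z) /\
    exists (f : 'S_n -> bool * X) (g : bool * X -> 'S_n),
      (forall u, bruhat u w -> g (f u) = u) /\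
      (forall p, bruhat (g p) w /\ f (g p) = p) /\
      (forall u v, bruhat u w -> bruhat v w ->
         (bruhat u v <-> ((f u).1 ==> (f v).1) /\ leX (f u).2 (f v).2)).

Definition unconfined (s : seq nat) (i : nat) : Prop :=
  count_mem i s = 1 /\
  let k := index i s in
  ~ ((i.+1 \in take k s) && (i.+1 \in drop k.+1 s)) /\
  ~ ((0 < i) && (i.-1 \in take k s) && (i.-1 \in drop k.+1 s)).

(* one-line notation: w(x) for 1 <= x <= n (0 outside) *)
Definition oneline (n : nat) (w : 'S_n) (x : nat) : nat :=
  if 0 < x then
    match (insub x.-1 : option 'I_n) with Some j => (val (w j)).+1 | None => 0 end
  else 0.

(* z_0 = 0, z_a = a-th element of zs (1 <= a <= k), z_{k+1} = n+1 *)
Definition bnd (n k : nat) (zs : seq nat) (a : nat) : nat :=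
  if a == 0 then 0 else if a == k.+1 then n.+1 else nth 0 zs a.-1.

Definition occ_vals (n : nat) (w : 'S_n) (xs : seq nat) : seq nat :=
  sort leq (map (oneline w) xs).

Definition mesh_occ (n : nat) (w : 'S_n) (p : seq nat) (M : pred (nat * nat))
    (xs : seq nat) : Prop :=
  let k := size p in
  let ys := occ_vals w xs in
  size xs = k /\ sorted ltn xs /\ all (fun x => 0 < x <= n) xs /\
  (forall a b, a < k -> b < k ->
     (oneline w (nth 0 xs a) < oneline w (nth 0 xs b)) = (nth 0 p a < nth 0 p b)) /\
  (forall a b, M (a, b) -> forall x,
     bnd n k xs a < x < bnd n k xs a.+1 ->
     ~ (bnd n k ys b < oneline w x < bnd n k ys b.+1)).

Definition contains_cal (n : nat) (w : 'S_n) (p : seq nat) (M : pred (nat * nat))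
    (a0 xa b0 yb : nat) : Prop :=
  exists xs, mesh_occ w p M xs /\
    bnd n (size p) xs a0 = xa /\ bnd n (size p) (occ_vals w xs) b0 = yb.

Definition meshR : pred (nat * nat) :=
  fun c => ((c.1 <= 4) && (c.2 == 2)) || ((c.1 == 2) && (c.2 <= 4)).
Definition meshU : pred (nat * nat) :=
  fun c => (c.1 <= 2) && ((c.2 == 3) || (c.2 == 4)).
Definition meshD : pred (nat * nat) :=
  fun c => ((c.1 == 3) || (c.1 == 4)) && (c.2 <= 2).
Definition predU3 (A B C : pred (nat * nat)) : pred (nat * nat) :=
  fun c => A c || B c || C c.

From mathcomp Require Import all_boot all_order all_fingroup zify.
Set Implicit Arguments. Unset Strict Implicit. Unset Printing Implicit Defensive.

(* Take a reduced word L i R of w in which i occurs only once.  Words avoiding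
   a letter j stabilise the initial segment {1..j}, so in w = u s_i v (u, v
   the products of L and R) exactly one position A <= i is sent above i and
   exactly one position B > i is sent to at most i.  For a reduced word, j
   occurs iff w does not stabilise {1..j}; this is read off from the inversion
   count, which equals the length of reduced words.  Applied to u and v it
   shows that A = i iff i-1 does not occur in R, w(B) = i iff i-1 does not
   occur in L, and likewise B = i+1 and w(A) = i+1 for the letter i+1.  As
   i-1 and i+1 are in the support and i is unconfined, each of them occurs in
   exactly one of L and R, which leaves four configurations; in each of them
   A, i, i+1, B, completed by the preimages of i or i+1 where needed, give one
   of the four patterns.  All four avoid even the shading R ∪ U ∪ D, because A
   and B are the only positions crossing the level i. *)

(** * Adjacent transpositions and inversions *)

Lemma tperm_val n (a b x : 'I_n) :
  tperm a b x = (if x == a then b else if x == b then a else x) :> nat.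
Proof.
by case: tpermP => [->|->|/eqP/negbTE-> /eqP/negbTE->]; rewrite ?eqxx //; case: eqP => [->|].
Qed.

Section AdjacentTransposition.
Variables (n : nat) (a b : 'I_n).
Hypothesis adj : b = a.+1 :> nat.

Lemma tperm_adj_ltn (x y : 'I_n) :
  ~~ ((x == a) && (y == b)) -> ~~ ((x == b) && (y == a)) ->
  (tperm a b x < tperm a b y) = (x < y).
Proof.
rewrite !tperm_val -!val_eqE /=.
by case: (x =P a :> nat); case: (x =P b :> nat); case: (y =P a :> nat);
  case: (y =P b :> nat) => /=; lia.
Qed.

Lemma tperm_adj_ltn_bound (x : 'I_n) (j : nat) : j != b -> (tperm a b x < j) = (x < j).
Proof.
move/eqP=> jb; rewrite tperm_val -!val_eqE /=.
by case: (x =P a :> nat); case: (x =P b :> nat) => /=; lia.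
Qed.

End AdjacentTransposition.

Lemma sgm_tperm n k : 0 < k < n ->
  exists a b : 'I_n, [/\ a = k.-1 :> nat, b = k :> nat & sgm n k = tperm a b].
Proof.
move=> /andP[k_gt0 k_lt]; have k1_lt : k.-1 < n by lia.
exists (Ordinal k1_lt), (Ordinal k_lt); split => //.
by rewrite /sgm (insubT (fun x => x < n) k1_lt) (insubT (fun x => x < n) k_lt) k_gt0.
Qed.

Lemma sgm_id n k : ~~ (0 < k < n) -> sgm n k = 1%g.
Proof.
move=> kN; rewrite /sgm; case: insubP => [a _ _|//]; case: insubP => [b k_lt _|//].
by case: ifP => // k_gt0; move: kN; rewrite k_gt0 k_lt.
Qed.

Lemma sgmV n k : (sgm n k)^-1%g = sgm n k.
Proof.
have [/sgm_tperm[a [b [_ _ ->]]]|/sgm_id->] := boolP (0 < k < n).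
  exact: tpermV.
exact: invg1.
Qed.

Definition ninv n (p : 'S_n) : nat :=
  \sum_(z : 'I_n * 'I_n) ((z.1 < z.2) && (p z.2 < p z.1)).

Lemma ninv1 n : ninv (1 : 'S_n)%g = 0.
Proof. by rewrite /ninv big1 // => z _; rewrite !perm1; case: ltngtP. Qed.

Lemma ninvV n (p : 'S_n) : ninv p^-1%g = ninv p.
Proof.
have swap_inj : injective (fun z : 'I_n * 'I_n => (p z.2, p z.1)).
  by move=> [x1 x2] [y1 y2] [/perm_inj-> /perm_inj->].
rewrite /ninv (reindex_inj swap_inj); apply: eq_bigr => z _.
by rewrite /= !permK andbC.
Qed.

Lemma sum_except2 (T : finType) (f g : T -> nat) z1 z2 : z1 != z2 ->
  (forall z, z != z1 -> z != z2 -> f z = g z) ->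
  \sum_z f z + g z1 + g z2 = \sum_z g z + f z1 + f z2.
Proof.
move=> z12 fg; rewrite (bigD1 z1) // [\sum_z g z](bigD1 z1) //=.
rewrite (bigD1 z2) 1?eq_sym // [\sum_(z | z != z1) g z](bigD1 z2) 1?eq_sym //=.
rewrite (eq_bigr g) => [|z /andP[]]; last exact: fg.
lia.
Qed.

(* Swapping the adjacent values a, a+1 only changes whether the pair of their
   positions is an inversion. *)
Lemma ninv_mul_tperm n (p : 'S_n) (a b : 'I_n) : b = a.+1 :> nat ->
  ninv (p * tperm a b)%g + (p^-1%g b < p^-1%g a) = ninv p + (p^-1%g a < p^-1%g b).
Proof.
move=> adj; set x := p^-1%g a; set y := p^-1%g b.
have px : p x = a by rewrite permKV.
have py : p y = b by rewrite permKV.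
have xy : (x, y) != (y, x).
  by apply/eqP=> -[exy _]; move: adj; rewrite -px -py exy; lia.
have := @sum_except2 _
  (fun z : 'I_n * 'I_n => (z.1 < z.2) && ((p * tperm a b)%g z.2 < (p * tperm a b)%g z.1))
  (fun z : 'I_n * 'I_n => (z.1 < z.2) && (p z.2 < p z.1)) _ _ xy.
rewrite /ninv /= !permM px py tpermL tpermR.
have -> : (b < a) = false by lia.
have -> : (a < b) = true by lia.
rewrite !andbF !andbT !addn0; apply=> -[z1 z2] zxy zyx /=.
congr (_ && _); rewrite !permM tperm_adj_ltn //; apply/negP=> /andP[/eqP e2 /eqP e1].
- by move: zyx; rewrite /x /y -e1 -e2 !permK eqxx.
- by move: zxy; rewrite /x /y -e1 -e2 !permK eqxx.
Qed.

Lemma ninv_mul_sgm n (p : 'S_n) k : ninv (p * sgm n k)%g <= (ninv p).+1.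
Proof.
have [kP|/sgm_id->] := boolP (0 < k < n); last by rewrite mulg1.
have [a [b [ea eb ->]]] := sgm_tperm kP.
have := @ninv_mul_tperm n p a b ltac:(lia).
by case: (p^-1%g b < p^-1%g a); case: (p^-1%g a < p^-1%g b) => /=; lia.
Qed.

(** * Reduced words *)

Lemma word_perm_cons n k t : word_perm n (k :: t) = (word_perm n t * sgm n k)%g.
Proof. by []. Qed.

Lemma word_perm_cat n L R : word_perm n (L ++ R) = (word_perm n R * word_perm n L)%g.
Proof. by elim: L => [|k L IH] /=; rewrite ?mulg1 // IH mulgA. Qed.

Lemma word_perm_rev n t : word_perm n (rev t) = (word_perm n t)^-1%g.
Proof.
elim: t => [|k t IH]; first by rewrite invg1.
by rewrite rev_cons -cats1 word_perm_cat IH word_perm_cons invMg sgmV /= mul1g.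
Qed.

Lemma ninv_word_perm_catr n L R :
  ninv (word_perm n (L ++ R)) <= size L + ninv (word_perm n R).
Proof.
elim: L => [//|k L IH]; have := ninv_mul_sgm (word_perm n (L ++ R)) k.
by rewrite -word_perm_cons -cat_cons [size _]/=; lia.
Qed.

Lemma ninv_word_perm n t : ninv (word_perm n t) <= size t.
Proof. by have := ninv_word_perm_catr n t [::]; rewrite cats0 ninv1 addn0. Qed.

Lemma ninv_word_perm_catl n L R :
  ninv (word_perm n (L ++ R)) <= ninv (word_perm n L) + size R.
Proof.
rewrite -ninvV -word_perm_rev rev_cat.
by have := ninv_word_perm_catr n (rev R) (rev L); rewrite word_perm_rev ninvV size_rev addnC.
Qed.

Lemma perm_ascending_eq1 n (q : 'S_n) :
  (forall a b : 'I_n, b = a.+1 :> nat -> q a < q b) -> q = 1%g.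
Proof.
move=> asc.
have up m (lt_mn : m < n) : m <= q (Ordinal lt_mn).
  elim: m lt_mn => [//|m IH] lt_mn.
  by have := asc (Ordinal (ltnW lt_mn)) (Ordinal lt_mn) erefl; have := IH (ltnW lt_mn); lia.
have down d m (lt_mn : m < n) : m + d = n.-1 -> q (Ordinal lt_mn) <= m.
  elim: d m lt_mn => [|d IH] m lt_mn md; first by have := ltn_ord (q (Ordinal lt_mn)); lia.
  have lt_m1n : m.+1 < n by lia.
  by have := asc (Ordinal lt_mn) (Ordinal lt_m1n) erefl; have := IH _ lt_m1n ltac:(lia); lia.
apply/permP => -[m lt_mn]; apply/val_inj; rewrite perm1 /=.
by have := up m lt_mn; have := down (n.-1 - m) m lt_mn ltac:(lia); lia.
Qed.

Lemma perm_neq1_adj_inversion n (p : 'S_n) : p != 1%g ->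
  exists a b : 'I_n, b = a.+1 :> nat /\ p^-1%g b < p^-1%g a.
Proof.
move=> p1.
case: (pickP [pred ab : 'I_n * 'I_n | (ab.2 == ab.1.+1 :> nat) && (p^-1%g ab.2 < p^-1%g ab.1)]).
  by move=> [a b] /andP[/eqP adj desc]; exists a, b.
move=> asc; case/eqP: p1; rewrite -[p]invgK (@perm_ascending_eq1 _ p^-1%g) ?invg1 // => a b adj.
have := asc (a, b); rewrite /= adj eqxx /= => /negbT; rewrite -leqNgt leq_eqVlt.
case/orP=> [/eqP/val_inj/perm_inj ab|//].
by move: adj; rewrite ab; lia.
Qed.

Lemma word_of_perm n (p : 'S_n) :
  exists t, [/\ valid_word n t, word_perm n t = p & size t = ninv p].
Proof.
have [m] := ubnP (ninv p); elim: m p => // m IH p lt_pm.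
have [->|p1] := eqVneq p 1%g; first by exists [::]; rewrite ninv1.
have [a [b [adj desc]]] := perm_neq1_adj_inversion p1.
set p' := (p * tperm a b)%g.
have p'p : (p' * tperm a b)%g = p by rewrite -mulgA tperm2 mulg1.
have p'V x : p'^-1%g x = p^-1%g (tperm a b x) by rewrite invMg tpermV permM.
have := ninv_mul_tperm p' adj; rewrite p'p !p'V tpermL tpermR desc ltnNge ltnW //= addn0.
move=> ninv_p; have [t [valid_t pt size_t]] := IH p' ltac:(lia).
have b_valid : 0 < b < n by rewrite ltn_ord adj.
have sgm_b : sgm n b = tperm a b.
  have [a' [b' [ea' eb' ->]]] := sgm_tperm b_valid.
  by congr tperm; apply: val_inj; rewrite /= ?ea' ?eb' ?adj.
exists (val b :: t); split; last by rewrite /= size_t; lia.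
  by rewrite /valid_word /= b_valid; exact: valid_t.
by rewrite word_perm_cons pt sgm_b p'p.
Qed.

Lemma reducedE n (w : 'S_n) s :
  reduced w s <-> [/\ valid_word n s, word_perm n s = w & size s = ninv w].
Proof.
split=> [[valid_s [ws min_s]]|[valid_s ws size_s]].
  have [t [valid_t wt size_t]] := word_of_perm w.
  by split=> //; have := min_s t valid_t wt; have := ninv_word_perm n s; rewrite ws; lia.
by do 2 split=> //; move=> t _ wt; rewrite size_s -wt ninv_word_perm.
Qed.

Lemma reduced_catl n (w : 'S_n) L R : reduced w (L ++ R) -> reduced (word_perm n L) L.
Proof.
move=> /reducedE[]; rewrite /valid_word all_cat size_cat => /andP[valid_L _] <- size_LR.
apply/reducedE; split=> //.
by have := ninv_word_perm_catl n L R; have := ninv_word_perm n L; lia.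
Qed.

Lemma reduced_catr n (w : 'S_n) L R : reduced w (L ++ R) -> reduced (word_perm n R) R.
Proof.
move=> /reducedE[]; rewrite /valid_word all_cat size_cat => /andP[_ valid_R] <- size_LR.
apply/reducedE; split=> //.
by have := ninv_word_perm_catr n L R; have := ninv_word_perm n R; lia.
Qed.

Lemma reduced_letter n (w : 'S_n) s j : reduced w s -> j \in s -> 0 < j < n.
Proof. by case=> /allP valid_s _ /valid_s. Qed.

(** * Letters of reduced words and stable initial segments *)

Definition prefix_stable n (p : 'S_n) (j : nat) : bool :=
  [forall x : 'I_n, (p x < j) == (x < j)].

Lemma prefix_stableP n (p : 'S_n) j :
  reflect (forall x, (p x < j) = (x < j)) (prefix_stable p j).
Proof. by apply: (iffP forallP) => st x; [exact: eqP (st x) | rewrite st]. Qed.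

Lemma prefix_stable_word n t j : j \notin t -> prefix_stable (word_perm n t) j.
Proof.
elim: t => [|k t IH]; first by move=> _; apply/prefix_stableP => x; rewrite perm1.
rewrite inE negb_or => /andP[jk /IH/prefix_stableP st]; apply/prefix_stableP => x.
rewrite word_perm_cons permM -(st x).
have [kP|/sgm_id->] := boolP (0 < k < n); last by rewrite perm1.
have [a [b [ea eb ->]]] := sgm_tperm kP.
have adj : b = a.+1 :> nat by lia.
by rewrite (tperm_adj_ltn_bound adj) // eb.
Qed.

Lemma reduced_crossing n (w : 'S_n) t (j : nat) : reduced w t -> j \in t ->
  exists x y : 'I_n, [/\ x < j, j <= y & w y < w x].
Proof.
elim: t w => [//|k t IH] w red_kt jkt.
have kP := reduced_letter red_kt (mem_head k t).
have [a [b [ea eb sgm_k]]] := sgm_tperm kP.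
have adj : b = a.+1 :> nat by lia.
have red_t := reduced_catr (L := [:: k]) red_kt.
case/reducedE: red_kt => _; rewrite word_perm_cons sgm_k => <- {w} size_kt.
set p := word_perm n t in red_t size_kt *.
have asc : p^-1%g a < p^-1%g b.
  case/reducedE: red_t => _ _ size_t; have := ninv_mul_tperm p adj.
  rewrite -size_kt [size _]/= size_t.
  by case: (p^-1%g a < p^-1%g b); case: (p^-1%g b < p^-1%g a) => //= ninv_eq; exfalso; lia.
have [/(IH _ red_t)[x [y [xj jy pyx]]]|jt] := boolP (j \in t).
  exists x, y; split=> //; rewrite !permM tperm_adj_ltn //.
    apply/negP=> /andP[/eqP py /eqP px]; move: asc.
    by rewrite -px -py !permK; lia.
  by apply/negP=> /andP[/eqP py /eqP px]; move: pyx; rewrite px py; lia.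
move: jkt; rewrite inE (negbTE jt) orbF => /eqP jk.
have /prefix_stableP st := prefix_stable_word n jt.
exists (p^-1%g a), (p^-1%g b); rewrite -(st (p^-1%g a)) (leqNgt j) -(st (p^-1%g b)).
by rewrite !permM !permKV tpermL tpermR; split; lia.
Qed.

Lemma mem_reduced n (w : 'S_n) t (j : nat) :
  reduced w t -> (j \in t) = ~~ prefix_stable w j.
Proof.
move=> red_t; apply/idP/idP => [/(reduced_crossing red_t)[x [y [xj jy wyx]]]|].
  apply/prefix_stableP => st; move: (st x) (st y); rewrite xj (ltnNge y) jy /= => wxj.
  by move/negbT; rewrite -leqNgt; lia.
apply: contraR => jt; case/reducedE: red_t => _ <- _.
exact: prefix_stable_word.
Qed.

Lemma supp_mem n (w : 'S_n) j s : supp w j -> reduced w s -> j \in s.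
Proof.
by move=> [s' [red_s' js']] red_s; rewrite (mem_reduced j red_s) -(mem_reduced j red_s').
Qed.

Lemma prefix_stable_succ n (p : 'S_n) (o : 'I_n) :
  prefix_stable p o -> (p o == o) = prefix_stable p o.+1.
Proof.
move=> /prefix_stableP st; apply/eqP/prefix_stableP => [po x|st1].
  have [->|xo] := eqVneq x o; first by rewrite po.
  have pxo : p x != o by rewrite -{1}po (inj_eq perm_inj).
  move: (st x) xo pxo; rewrite -!val_eqE /=; lia.
by apply/val_inj; move: (st o) (st1 o); rewrite ltnn ltnS leqnn /=; lia.
Qed.

Lemma prefix_stable_pred n (p : 'S_n) (o : 'I_n) :
  prefix_stable p o.+1 -> (p o == o) = prefix_stable p o.
Proof.
move=> /prefix_stableP st; apply/eqP/prefix_stableP => [po x|st0].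
  have [->|xo] := eqVneq x o; first by rewrite po.
  have pxo : p x != o by rewrite -{1}po (inj_eq perm_inj).
  move: (st x) xo pxo; rewrite -!val_eqE /=; lia.
by apply/val_inj; move: (st o) (st0 o); rewrite ltnn ltnS leqnn /=; lia.
Qed.

Definition crossing_pair n (w : 'S_n) (i : nat) (a b : 'I_n) : Prop :=
  [/\ a < i <= b, i <= w a, w b < i &
      forall x, x != a -> x != b -> (w x < i) = (x < i)].

Lemma crossing_pair_tperm n (u v : 'S_n) (o1 o2 : 'I_n) : o2 = o1.+1 :> nat ->
  prefix_stable u o2 -> prefix_stable v o2 ->
  crossing_pair (v * tperm o1 o2 * u)%g o2 (v^-1%g o1) (v^-1%g o2).
Proof.
move=> adj /prefix_stableP stu /prefix_stableP stv; split.
- by rewrite -(stv (v^-1%g o1)) (leqNgt o2) -(stv (v^-1%g o2)) !permKV adj ltnSn ltnn.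
- by rewrite !permM permKV tpermL leqNgt stu ltnn.
- by rewrite !permM permKV tpermR stu adj.
move=> x xa xb; rewrite !permM tpermD ?stu ?stv //.
  by apply: contraNneq xa => ->; rewrite permK.
by apply: contraNneq xb => ->; rewrite permK.
Qed.

Lemma reduced_crossing_pair n (w : 'S_n) L R i :
  reduced w (L ++ i :: R) -> i \notin L -> i \notin R ->
  exists a b : 'I_n, crossing_pair w i a b /\
    [/\ (a == i.-1 :> nat) = (i.-1 \notin R), (w b == i.-1 :> nat) = (i.-1 \notin L),
        (b == i :> nat) = (i.+1 \notin R) & (w a == i :> nat) = (i.+1 \notin L)].
Proof.
move=> red iL iR.
have iP : 0 < i < n by apply: (reduced_letter red); rewrite mem_cat mem_head orbT.
have [o1 [o2 [e1 e2 sgm_i]]] := sgm_tperm iP.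
have adj : o2 = o1.+1 :> nat by lia.
have red_L := reduced_catl red.
have red_R := reduced_catr (L := [:: i]) (reduced_catr red).
have stL : prefix_stable (word_perm n L) o2 by rewrite e2; exact: prefix_stable_word.
have stR : prefix_stable (word_perm n R) o2 by rewrite e2; exact: prefix_stable_word.
have w_RL : w = (word_perm n R * tperm o1 o2 * word_perm n L)%g.
  by case/reducedE: red => _ <- _; rewrite word_perm_cat word_perm_cons sgm_i.
have fixV (p : 'S_n) o : (p^-1%g o == o) = (p o == o).
  by apply/eqP/eqP => po; rewrite -{1}po ?permK ?permKV.
exists ((word_perm n R)^-1%g o1), ((word_perm n R)^-1%g o2); split.
  by rewrite w_RL -e2; exact: crossing_pair_tperm.
rewrite !(mem_reduced _ red_L) !(mem_reduced _ red_R) !negbK -e1 -e2 !val_eqE.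
rewrite w_RL !permM !permKV tpermL tpermR !fixV.
have stL1 : prefix_stable (word_perm n L) o1.+1 by rewrite -adj.
have stR1 : prefix_stable (word_perm n R) o1.+1 by rewrite -adj.
by split; [exact: prefix_stable_pred | exact: prefix_stable_pred
          | exact: prefix_stable_succ | exact: prefix_stable_succ].
Qed.

(** * Pattern occurrences around a crossing pair *)

Lemma oneline_ord n (w : 'S_n) (o : 'I_n) : oneline w o.+1 = (w o).+1.
Proof.
rewrite /oneline /= (insubT (fun x => x < n) (ltn_ord o)) /=.
by congr (_.+1); congr (nat_of_ord (w _)); apply: val_inj.
Qed.

Lemma ord_of_pos n x : 0 < x <= n -> exists o : 'I_n, x = o.+1.
Proof.
move=> x_range; have x1_lt : x.-1 < n by lia.
by exists (Ordinal x1_lt) => /=; lia.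
Qed.

Lemma oneline_range n (w : 'S_n) x : 0 < x <= n -> 0 < oneline w x <= n.
Proof. by move=> /ord_of_pos[o ->]; rewrite oneline_ord ltn_ord. Qed.

Lemma oneline_inj n (w : 'S_n) x y : 0 < x <= n -> 0 < y <= n ->
  oneline w x = oneline w y -> x = y.
Proof.
by move=> /ord_of_pos[o ->] /ord_of_pos[o' ->]; rewrite !oneline_ord => -[/val_inj/perm_inj->].
Qed.

Lemma oneline_surj n (w : 'S_n) v : 0 < v <= n -> exists2 x, 0 < x <= n & oneline w x = v.
Proof.
move=> /ord_of_pos[o ->]; exists (w^-1%g o).+1; last by rewrite oneline_ord permKV.
by rewrite ltn_ord.
Qed.

Lemma contains_cal_sub n (w : 'S_n) p (M M' : pred (nat * nat)) a0 xa b0 yb :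
  (forall c, M' c -> M c) ->
  contains_cal w p M a0 xa b0 yb -> contains_cal w p M' a0 xa b0 yb.
Proof.
move=> sub [xs [[size_xs [sorted_xs [range_xs [order_xs mesh_xs]]]] cal]].
by exists xs; do 5 split=> //; move=> c d /sub; exact: mesh_xs.
Qed.

Section CrossingPairPatterns.

Variables (n : nat) (w : 'S_n) (i : nat) (a b : 'I_n).
Hypothesis cross : crossing_pair w i a b.

Local Notation W := (oneline w).
Local Notation A := (nat_of_ord a).+1.
Local Notation B := (nat_of_ord b).+1.

Lemma crossing_pair_bounds : [/\ 0 < A <= i, i < B <= n, i < W A & W B <= i].
Proof.
case: cross => ab wa wb _; rewrite !oneline_ord.
by have := ltn_ord b; split; lia.
Qed.

Lemma oneline_crossing_low x : 0 < x <= i -> x = A \/ W x <= i.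
Proof.
move=> x_range; have [o xo] : exists o : 'I_n, x = o.+1.
  by apply: ord_of_pos; case: crossing_pair_bounds; lia.
subst x; have [->|oa] := eqVneq o a; [by left | right].
rewrite oneline_ord; case: cross => /andP[_ ib] _ _ /(_ o oa).
have ob : o != b by apply: contraTneq ib => <-; lia.
by move/(_ ob); lia.
Qed.

Lemma oneline_crossing_high x : i < x <= n -> x = B \/ i < W x.
Proof.
move=> x_range; have [o xo] : exists o : 'I_n, x = o.+1 by apply: ord_of_pos; lia.
subst x; have [->|ob] := eqVneq o b; [by left | right].
rewrite oneline_ord; case: cross => /andP[ai _] _ _ /(_ o).
have oa : o != a by apply: contraTneq ai => <-; lia.
by move/(_ oa ob); lia.
Qed.

Lemma contains_crossing p x1 x4 y1 y4 :
  0 < x1 < i -> i.+1 < x4 <= n -> y1 < i -> i.+1 < y4 ->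
  (A == x1) || (A == i) -> (B == i.+1) || (B == x4) -> perm_eq p [:: 1; 2; 3; 4] ->
  map W [:: x1; i; i.+1; x4] = [seq nth 0 [:: y1; i; i.+1; y4] k.-1 | k <- p] ->
  contains_cal w p (predU3 meshR meshU meshD) 2 i 2 i.
Proof.
move=> x1_range x4_range y1_lt y4_gt A_pat B_pat pP Wxs.
set xs := [:: x1; i; i.+1; x4]; set ys := [:: y1; i; i.+1; y4].
set f := fun k => nth 0 ys k.-1.
have size_p : size p = 4 by rewrite (perm_size pP).
have occ : occ_vals w xs = ys.
  have ys_sorted : sorted leq ys by rewrite /= !andbT; apply/and3P; split; lia.
  rewrite /occ_vals Wxs -[RHS](sorted_sort leq_trans ys_sorted).
  apply/perm_sortP; [exact: leq_total | exact: leq_trans | exact: anti_leq |].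
  exact: (perm_map f pP).
have f_mono : {in p &, forall u v, (f u < f v) = (u < v)}.
  move=> u v; rewrite !(perm_mem pP) !inE.
  by case/or4P=> /eqP-> /or4P[]/eqP->; rewrite /f /=; lia.
have Wnth u : u < 4 -> W (nth 0 xs u) = f (nth 0 p u).
  by move=> u4; rewrite -(nth_map 0 0) // Wxs (nth_map 0) // size_p.
exists xs; split; last by rewrite occ size_p.
rewrite /mesh_occ occ size_p; split=> //; split.
  by rewrite /= !andbT; apply/and3P; split; lia.
split; first by rewrite /= !andbT; apply/and4P; split; lia.
split=> [u v u4 v4|c d cell x x_cell].
  by rewrite !Wnth // f_mono // mem_nth // size_p.
(* Each shaded cell lies in column or row 2, which are empty, or in one of the
   quadrants {x <= i < i+1 < w(x)} and {i+1 < x, w(x) <= i}, whose only points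
   A and B are pattern points. *)
have := @oneline_crossing_low x; have := @oneline_crossing_high x.
case: crossing_pair_bounds => A_range B_range _ _.
move: cell x_cell; rewrite /predU3 /meshR /meshU /meshD /=.
by case: c => [|[|[|[|[|c]]]]]; case: d => [|[|[|[|[|d]]]]]; rewrite /bnd //=; lia.
Qed.

Lemma oneline_preimage_succ :
  B = i.+1 -> i.+1 < W A -> exists2 P, i.+1 < P <= n & W P = i.+1.
Proof.
move=> eB WA; case: crossing_pair_bounds => A_range B_range _ WB.
have [P P_range WP] := @oneline_surj n w i.+1 ltac:(lia).
exists P => //.
have PA : P != A by apply: contraTneq WA => <-; rewrite WP ltnn.
have PB : P != B by apply: contraTneq WB => <-; rewrite WP; lia.
by have := @oneline_crossing_low P; lia.
Qed.

Lemma oneline_preimage_self : A = i -> W B < i -> exists2 Q, 0 < Q < i & W Q = i.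
Proof.
move=> eA WB; case: crossing_pair_bounds => A_range B_range WA _.
have [Q Q_range WQ] := @oneline_surj n w i ltac:(lia).
exists Q => //.
have QA : Q != A by apply: contraTneq WA => <-; rewrite WQ ltnn.
have QB : Q != B by apply: contraTneq WB => <-; rewrite WQ ltnn.
by have := @oneline_crossing_high Q; lia.
Qed.

Lemma oneline_self_lt : A < i -> W B = i -> 0 < W i < i.
Proof.
move=> ltAi WB; case: crossing_pair_bounds => _ B_range _ _.
have := @oneline_crossing_low i; have := @oneline_inj n w i B; have := @oneline_range n w i.
lia.
Qed.

Lemma oneline_succ_gt : i.+1 < B -> W A = i.+1 -> i.+1 < W i.+1.
Proof.
move=> ltiB WA; case: crossing_pair_bounds => A_range B_range _ _.
have := @oneline_crossing_high i.+1; have := @oneline_inj n w i.+1 A.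
lia.
Qed.

Lemma contains_4123 : A < i -> B = i.+1 -> W B = i -> i.+1 < W A ->
  contains_cal w [:: 4; 1; 2; 3] (predU3 meshR meshU meshD) 2 i 2 i.
Proof.
move=> ltAi eB WB WA; have [P P_range WP] := oneline_preimage_succ eB WA.
have Wi := oneline_self_lt ltAi WB.
have Wi1 : W i.+1 = i by rewrite -eB.
apply: (contains_crossing (x1 := A) (x4 := P) (y1 := W i) (y4 := W A));
  last by rewrite /= Wi1 WP.
all: by rewrite ?eB ?eqxx ?orbT //; lia.
Qed.

Lemma contains_2341 : A = i -> W B < i -> i.+1 < B -> W A = i.+1 ->
  contains_cal w [:: 2; 3; 4; 1] (predU3 meshR meshU meshD) 2 i 2 i.
Proof.
move=> eA WB ltiB WA; have [Q Q_range WQ] := oneline_preimage_self eA WB.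
have Wi1 := oneline_succ_gt ltiB WA.
have Wi : W i = i.+1 by rewrite -{1}eA.
apply: (contains_crossing (x1 := Q) (x4 := B) (y1 := W B) (y4 := W i.+1));
  last by rewrite /= Wi WQ.
all: by rewrite ?eA ?eqxx ?orbT //; case: crossing_pair_bounds; lia.
Qed.

Lemma contains_3142 : A < i -> W B = i -> i.+1 < B -> W A = i.+1 ->
  contains_cal w [:: 3; 1; 4; 2] (predU3 meshR meshU meshD) 2 i 2 i.
Proof.
move=> ltAi WB ltiB WA.
have Wi := oneline_self_lt ltAi WB.
have Wi1 := oneline_succ_gt ltiB WA.
apply: (contains_crossing (x1 := A) (x4 := B) (y1 := W i) (y4 := W i.+1));
  last by rewrite /= WA WB.
all: by rewrite ?eqxx ?orbT //; case: crossing_pair_bounds; lia.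
Qed.

Lemma contains_2413 : A = i -> W B < i -> B = i.+1 -> i.+1 < W A ->
  contains_cal w [:: 2; 4; 1; 3] (predU3 meshR meshU meshD) 2 i 2 i.
Proof.
move=> eA WB eB WA.
have [Q Q_range WQ] := oneline_preimage_self eA WB.
have [P P_range WP] := oneline_preimage_succ eB WA.
have Wi : W i = W A by rewrite eA.
have Wi1 : W i.+1 = W B by rewrite eB.
apply: (contains_crossing (x1 := Q) (x4 := P) (y1 := W B) (y4 := W A));
  last by rewrite /= Wi Wi1 WQ WP.
all: by rewrite ?eA ?eB ?eqxx ?orbT //; lia.
Qed.

Lemma crossing_pair_contains :
  (a == i.-1 :> nat) != (w b == i.-1 :> nat) -> (b == i :> nat) != (w a == i :> nat) ->
  contains_cal w [:: 4; 1; 2; 3] (predU meshR meshD) 2 i 2 i \/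
  contains_cal w [:: 2; 3; 4; 1] (predU meshR meshU) 2 i 2 i \/
  contains_cal w [:: 3; 1; 4; 2] (predU3 meshR meshU meshD) 2 i 2 i \/
  contains_cal w [:: 2; 4; 1; 3] (predU3 meshR meshU meshD) 2 i 2 i.
Proof.
case: crossing_pair_bounds => A_range B_range WA WB.
have -> : (a == i.-1 :> nat) = (A == i) by lia.
have -> : (w b == i.-1 :> nat) = (W B == i) by rewrite oneline_ord; lia.
have -> : (b == i :> nat) = (B == i.+1) by [].
have -> : (w a == i :> nat) = (W A == i.+1) by rewrite oneline_ord.
have subD c : predU meshR meshD c -> predU3 meshR meshU meshD c.
  by rewrite /predU3 /= => /orP[]->; rewrite ?orbT.
have subU c : predU meshR meshU c -> predU3 meshR meshU meshD c.
  by rewrite /predU3 /= => /orP[]->; rewrite ?orbT.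
case: (A =P i) => eA; case: (W B =P i) => eWB //= _;
case: (B =P i.+1) => eB; case: (W A =P i.+1) => eWA //= _.
- by right; right; right; apply: contains_2413 => //; lia.
- by right; left; apply: (contains_cal_sub subU); apply: contains_2341 => //; lia.
- by left; apply: (contains_cal_sub subD); apply: contains_4123 => //; lia.
- by right; right; left; apply: contains_3142 => //; lia.
Qed.

End CrossingPairPatterns.
Lemma unconfined_split s i : unconfined s i ->
  exists L R, [/\ s = L ++ i :: R, i \notin L, i \notin R,
    ~~ ((i.+1 \in L) && (i.+1 \in R)) & ~~ ((0 < i) && (i.-1 \in L) && (i.-1 \in R))].
Proof.
move=> [once [succ_LR pred_LR]]; set k := index i s in succ_LR pred_LR.
have i_s : i \in s by rewrite -has_pred1 has_count once.
have s_LR : s = take k s ++ i :: drop k.+1 s.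
  by rewrite -{1}(cat_take_drop k s) (drop_nth i) ?index_mem // nth_index.
have : count_mem i (take k s) + count_mem i (drop k.+1 s) == 0.
  by move: once; rewrite {1}s_LR count_cat /= eqxx; lia.
rewrite addn_eq0 => /andP[/eqP/count_memPn iL /eqP/count_memPn iR].
by exists (take k s), (drop k.+1 s); split=> //; apply/negP.
Qed.

Theorem proposition3p6 (n : nat) (w : 'S_n) (i : nat) :
  prism w ->
  supp w i ->
  (forall s, reduced w s -> unconfined s i) ->
  supp w i.-1 -> supp w i.+1 ->
  contains_cal w [:: 4; 1; 2; 3] (predU meshR meshD) 2 i 2 i \/
  contains_cal w [:: 2; 3; 4; 1] (predU meshR meshU) 2 i 2 i \/
  contains_cal w [:: 3; 1; 4; 2] (predU3 meshR meshU meshD) 2 i 2 i \/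
  contains_cal w [:: 2; 4; 1; 3] (predU3 meshR meshU meshD) 2 i 2 i.
Proof.
move=> _ [s [red_s i_s]] unconf supp_pred supp_succ.
have /andP[i_gt0 _] := reduced_letter red_s i_s.
have [L [R [s_LR iL iR succ_LR pred_LR]]] := unconfined_split (unconf s red_s).
rewrite s_LR in red_s.
have [a [b [cross [ea ewb eb ewa]]]] := reduced_crossing_pair red_s iL iR.
have pred_i : (i.-1 == i) = false by lia.
have succ_i : (i.+1 == i) = false by lia.
apply: (crossing_pair_contains cross); rewrite ?ea ?ewb ?eb ?ewa.
  move: (supp_mem supp_pred red_s) pred_LR; rewrite mem_cat inE pred_i i_gt0.
  by case: (i.-1 \in L); case: (i.-1 \in R).
move: (supp_mem supp_succ red_s) succ_LR; rewrite mem_cat inE succ_i.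
by case: (i.+1 \in L); case: (i.+1 \in R).
Qed.
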